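(* Let $A$ be a graded algebra and $G\le\mathrm{GrAut}\,A$ a subgroup. For every $r\ge1$, $A^{[r]}*G\cong(A*G)^{[r]}$ as graded algebras.
   Context: Graded algebras are $\mathbb{N}$-graded algebras over an algebraically closed field $k$. For a graded vector space $V$, $V^{(r)}=\bigoplus_{n\in\mathbb{Z}}V_{rn}$ with degree $n$ part $V_{rn}$, and $V(j)_m=V_{j+m}$. The $r$-th quasi-Veronese algebra $A^{[r]}$ is the $r\times r$ matrix algebra (indices $0,\dots,r-1$) whose $(i,j)$ entry is $A(j-i)^{(r)}$, with multiplication $(a_{ij})(b_{ij})=(\sum_{k=0}^{r-1}a_{kj}b_{ik})$. $G$ acts on $A^{[r]}$ entrywise: $g((a_{ij}))=(g(a_{ij}))$. The skew group algebra $B*G=B\otimes_kkG$ has multiplication $(a*g)(b*h)=ag(b)*gh$, graded by $B$. *)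

From HB Require Import structures.
From mathcomp Require Import all_boot all_order all_algebra.
From mathcomp Require Import boolp classical_sets cardinality fsbigop.

Set Implicit Arguments.
Unset Strict Implicit.
Unset Printing Implicit Defensive.

Import GRing.Theory.
Local Open Scope ring_scope.

(* Conventions.  A (possibly constructed) graded algebra is presented by an   *)
(* ambient type [gT], a carrier predicate [gmem] (the elements of the         *)
(* algebra), its k-algebra operations, and the predicate [gdeg n x] meaning   *)
(* "x is homogeneous of degree n" (i.e. x lies in the degree-n component).    *)
(* [gdeg n x] is always meant to imply [gmem x].                              *)
Record gAlg (k : Type) := GAlg {
  gT : Type;
  gmem : gT -> Prop;
  gadd : gT -> gT -> gT;
  gzero : gT;
  gscale : k -> gT -> gT;
  gmul : gT -> gT -> gT;
  gone : gT;
  gdeg : nat -> gT -> Prop }.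
Arguments gT {k} g.
Arguments gmem {k} g _.
Arguments gadd {k} g _ _.
Arguments gzero {k} g.
Arguments gscale {k} g _ _.
Arguments gmul {k} g _ _.
Arguments gone {k} g.
Arguments gdeg {k} g _ _.

Definition galg_iso (k : Type) (X Y : gAlg k) (f : gT X -> gT Y) : Prop :=
  (forall x, gmem X x -> gmem Y (f x)) /\
  (forall x y, gmem X x -> gmem X y -> f x = f y -> x = y) /\
  (forall y, gmem Y y -> exists2 x, gmem X x & f x = y) /\
  (forall x y, gmem X x -> gmem X y -> f (gadd X x y) = gadd Y (f x) (f y)) /\
  (forall c x, gmem X x -> f (gscale X c x) = gscale Y c (f x)) /\
  (forall x y, gmem X x -> gmem X y -> f (gmul X x y) = gmul Y (f x) (f y)) /\
  f (gone X) = gone Y /\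
  (forall n x, gmem X x -> (gdeg X n x <-> gdeg Y n (f x))).

Section GradedAlgebra.
Variables (k : fieldType) (A : algType k).

(* [Ad n] is the degree-n component A_n of an N-grading A = (+)_n A_n.        *)
Definition is_grading (Ad : nat -> A -> Prop) : Prop :=
  (forall n, Ad n 0) /\
  (forall n a b, Ad n a -> Ad n b -> Ad n (a + b)) /\
  (forall n (c : k) a, Ad n a -> Ad n (c *: a)) /\
  (forall a, exists N (f : nat -> A),
      (forall d, Ad d (f d)) /\ a = \sum_(d < N) f d) /\
  (forall N (f : nat -> A), (forall d, Ad d (f d)) ->
      \sum_(d < N) f d = 0 -> forall d, (d < N)%N -> f d = 0) /\
  (forall m n a b, Ad m a -> Ad n b -> Ad (m + n) (a * b)) /\
  Ad 0 1.

Definition alg_of (Ad : nat -> A -> Prop) : gAlg k :=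
  @GAlg k A (fun _ => True) +%R 0 *:%R *%R 1 Ad.

Definition is_grAut (Ad : nat -> A -> Prop) (phi : A -> A) : Prop :=
  (forall a b, phi (a + b) = phi a + phi b) /\
  (forall (c : k) a, phi (c *: a) = c *: phi a) /\
  (forall a b, phi (a * b) = phi a * phi b) /\
  phi 1 = 1 /\
  bijective phi /\
  (forall n a, Ad n a <-> Ad n (phi a)).

(* G <= GrAut A : a group G together with a faithful action of G on A by    *)
(* graded algebra automorphisms (identifying G with its image in GrAut A).  *)
Definition is_GrAut_subgroup (Ad : nat -> A -> Prop) (G : groupType)
    (act : G -> A -> A) : Prop :=
  (forall g, is_grAut Ad (act g)) /\
  (forall g h a, act (g * h)%g a = act g (act h a)) /\
  (forall g h, act g =1 act h -> g = h).

End GradedAlgebra.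

Section Constructions.
Variable k : Type.

Section QuasiVeronese.
Variables (B : gAlg k) (r : nat).

(* b lies in B(j-i)^(r) = (+)_{n in Z} B_{rn+j-i}, i.e. b is a sum of        *)
(* homogeneous elements of degrees d with d = j - i (mod r).                 *)
Definition in_qver_entry (i j : 'I_r) (b : gT B) : Prop :=
  exists N (f : nat -> gT B), (forall d, gdeg B d (f d)) /\
    b = \big[gadd B/gzero B]_(d < N | (d + i == j %[mod r])%N) f d.

(* b lies in the degree-n part of B(j-i)^(r), namely B_{rn+j-i}             *)
(* (which is 0 when rn+j-i < 0).                                             *)
Definition qver_entry_deg (n : nat) (i j : 'I_r) (b : gT B) : Prop :=
  if (i <= r * n + j)%N then gdeg B (r * n + j - i) b else b = gzero B.

Definition qver : gAlg k :=
  @GAlg k 'M[gT B]_r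
    (fun M => forall i j, in_qver_entry i j (M i j))
    (fun M N => \matrix_(i, j) gadd B (M i j) (N i j))
    (\matrix_(i, j) gzero B)
    (fun c M => \matrix_(i, j) gscale B c (M i j))
    (fun M N => \matrix_(i, j) \big[gadd B/gzero B]_(l < r) gmul B (M l j) (N i l))
    (\matrix_(i, j) if i == j then gone B else gzero B)
    (fun n M => forall i j, qver_entry_deg n i j (M i j)).

Definition qver_act (G : Type) (act : G -> gT B -> gT B) (g : G)
    (M : 'M[gT B]_r) : 'M[gT B]_r :=
  \matrix_(i, j) act g (M i j).

End QuasiVeronese.

(* Elements are finitely supported functions x : G -> B, standing for the    *)
(* finite formal sum  sum_g x(g) * g.                                         *)
Section Skew.
Variables (B : gAlg k) (G : groupType) (act : G -> gT B -> gT B).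

Local Open Scope classical_set_scope.

Definition skew_mem (x : G -> gT B) : Prop :=
  (forall g, gmem B (x g)) /\ finite_set [set g | x g <> gzero B].

Definition skew_group_alg : gAlg k :=
  @GAlg k (G -> gT B)
    skew_mem
    (fun x y g => gadd B (x g) (y g))
    (fun _ => gzero B)
    (fun c x g => gscale B c (x g))
    (* (a*g)(b*h) = a g(b) * gh *)
    (fun x y h => \big[gadd B/gzero B]_(g \in [set: G])
                     gmul B (x g) (act g (y (g^-1 * h)%g)))
    (fun g => if g == 1%g then gone B else gzero B)
    (fun n x => skew_mem x /\ forall g, gdeg B n (x g)).

End Skew.
End Constructions.

Arguments qver_act {k} B r {G} act g M.
Arguments skew_group_alg {k} B {G} act.
Arguments qver {k} B r.
Arguments galg_iso {k} X Y f.

(** The isomorphism transposes the two layers of indexing: a finite formal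
    sum [sum_g M_g * g] with [M_g] in [A^[r]] goes to the matrix whose
    [(i, j)] entry is [sum_g (M_g)_ij * g] in [A * G].  Since [G] acts on
    [A^[r]] entrywise, the twisted product [M_g g(N_h)] of [A^[r] * G] is
    computed entry by entry exactly as in [(A * G)^[r]], and the membership
    and degree conditions on both sides are the same conditions on the
    entries [(M_g)_ij].  Beyond [0] lying in every [A_d], no property of the
    grading or of the action is needed, and [r = 0] is not excluded. *)

From HB Require Import structures.
From mathcomp Require Import all_boot all_order all_algebra.
From mathcomp Require Import boolp classical_sets cardinality functions fsbigop.

Set Implicit Arguments.
Unset Strict Implicit.
Unset Printing Implicit Defensive.

Import GRing.Theory.
Local Open Scope ring_scope.
Local Open Scope classical_set_scope.

Section Support.
Variables (T : Type) (R : zmodType).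

Lemma finite_support_sum (I : Type) (s : seq I) (P : pred I) (F : I -> T -> R) :
  (forall i, finite_set [set t | F i t <> 0]) ->
  finite_set [set t | \sum_(i <- s | P i) F i t <> 0].
Proof.
move=> finF; elim: s => [|i s IHs].
  by apply: (sub_finite_set (B := set0)) => // t /=; rewrite big_nil.
apply: (sub_finite_set (B := [set t | F i t <> 0] `|` [set t | \sum_(j <- s | P j) F j t <> 0])).
  move=> t /=; rewrite big_cons; case: (P i) => Fst0; last by right.
  by apply: contra_notP Fst0 => /not_orP[/contrapT -> /contrapT ->]; rewrite addr0.
by rewrite finite_setU.
Qed.

Lemma finite_support_mx m n (x : T -> 'M[R]_(m, n)) :
  finite_set [set t | x t <> 0] <->
  forall i j, finite_set [set t | x t i j <> 0].
Proof.
split=> [finx i j | finxij].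
  by apply: sub_finite_set finx => t /= xtij0 xt0; apply: xtij0; rewrite xt0 mxE.
apply: (sub_finite_set (B := \bigcup_(p in [set: 'I_m * 'I_n]) [set t | x t p.1 p.2 <> 0])).
  move=> t /= xt0; apply: contrapT => xt0'; apply: xt0; apply/matrixP => i j.
  by rewrite mxE; apply: contrapT => xtij0; apply: xt0'; exists (i, j).
by apply: bigcup_finite => // p _; apply: finxij.
Qed.

End Support.

Lemma fsbig_finite_support (T : choiceType) (R : nmodType) (F : T -> R) (s : seq T) :
  (forall t, F t != 0 -> t \in s) ->
  \sum_(t \in [set: T]) F t = \sum_(t <- undup s) F t.
Proof.
move=> suppF; rewrite (fsbigE (undup s)) ?undup_uniq //; last first.
  by move=> t _; rewrite mem_undup; apply: contraNeq => /suppF.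
by apply: eq_bigl => t; rewrite in_setT.
Qed.

Section MatrixOfFunctions.
Variables (G T : Type) (m n : nat).

Definition mx_fun (x : G -> 'M[T]_(m, n)) : 'M[G -> T]_(m, n) :=
  \matrix_(i, j) fun g => x g i j.

Definition fun_mx (M : 'M[G -> T]_(m, n)) : G -> 'M[T]_(m, n) :=
  fun g => \matrix_(i, j) M i j g.

Lemma mx_funE x i j : mx_fun x i j = fun g => x g i j.
Proof. by rewrite mxE. Qed.

Lemma mx_funK : cancel mx_fun fun_mx.
Proof. by move=> x; apply/funext => g; apply/matrixP => i j; rewrite !mxE. Qed.

Lemma fun_mxK : cancel fun_mx mx_fun.
Proof.
by move=> M; apply/matrixP => i j; rewrite mxE; apply/funext => g; rewrite mxE.
Qed.

End MatrixOfFunctions.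

Section GAlgProducts.
Variables (k : Type) (B : gAlg k).

Lemma qver_mulE r (M N : 'M[gT B]_r) i j :
  gmul (qver B r) M N i j = \big[gadd B/gzero B]_(l < r) gmul B (M l j) (N i l).
Proof. by rewrite mxE. Qed.

Lemma skew_mulE (G : groupType) (act : G -> gT B -> gT B) (x y : G -> gT B) h :
  gmul (skew_group_alg B act) x y h =
  \big[gadd B/gzero B]_(g \in [set: G]) gmul B (x g) (act g (y (g^-1 * h)%g)).
Proof. by []. Qed.

End GAlgProducts.

Section SkewQuasiVeronese.
Variables (k : fieldType) (A : algType k) (Ad : nat -> A -> Prop).
Variables (G : groupType) (act : G -> A -> A) (r : nat).

Local Notation A_ := (alg_of Ad).
Local Notation AG := (skew_group_alg A_ act).

Lemma skew_sumE (I : Type) (s : seq I) (P : pred I) (F : I -> G -> A) :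
  \big[gadd AG/gzero AG]_(i <- s | P i) F i = \sum_(i <- s | P i) F i.
Proof. by []. Qed.

Hypothesis Ad0 : forall d, Ad d 0.

Lemma in_qver_entry_skew (i j : 'I_r) (y : G -> A) :
  in_qver_entry (B := AG) i j y <->
  finite_set [set g | y g <> 0] /\ forall g, in_qver_entry (B := A_) i j (y g).
Proof.
split=> [[N [F [degF ->]]] | [/finite_seqP[S suppy] yij]].
  rewrite skew_sumE fct_sumE; split.
    by apply: finite_support_sum => d; case: (degF d) => -[].
  by move=> g; exists N, (F^~ g); split=> // d; case: (degF d).
have /choice[e ye] : forall g, exists p : nat * (nat -> A),
    (forall d, Ad d (p.2 d)) /\
    y g = \sum_(d < p.1 | (d + i == j %[mod r])%N) p.2 d.
  by move=> g; have [N [F yF]] := yij g; exists (N, F).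
(* Pad the decompositions of the finitely many nonzero [y g], g in S, to a
   common length. *)
exists (\max_(g <- S) (e g).1)%N.
exists (fun d g => if (g \in S) && (d < (e g).1)%N then (e g).2 d else 0).
split=> [d|].
  split; last by move=> g /=; case: ifP => // _; apply: (ye g).1.
  split=> //; apply: (sub_finite_set (B := [set` S])) => // g /=.
  by case: ifP => // /andP[].
rewrite skew_sumE fct_sumE; apply/funext => g.
case Sg: (g \in S); last first.
  rewrite big1 //; apply: contrapT => yg0.
  have : [set` S] g by rewrite -suppy.
  by rewrite /= Sg.
have leN : ((e g).1 <= \max_(h <- S) (e h).1)%N by apply: leq_bigmax_seq.
rewrite (ye g).2 (big_ord_widen_cond _ (fun d => (d + i == j %[mod r])%N) (e g).2 leN).
by rewrite big_mkcondr; apply: eq_bigr.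
Qed.

Local Notation QA := (qver A_ r).
Local Notation QA_G := (skew_group_alg QA (qver_act A_ r act)).
Local Notation AG_Q := (qver AG r).

Lemma qver_zeroE : gzero QA = 0.
Proof. by apply/matrixP => i j; rewrite !mxE. Qed.

Lemma qver_sumE (I : Type) (s : seq I) (P : pred I) (F : I -> 'M[A]_r) :
  \big[gadd QA/gzero QA]_(i <- s | P i) F i = \sum_(i <- s | P i) F i.
Proof.
elim/big_rec2: _ => [|i M N _ ->]; first exact: qver_zeroE.
by apply/matrixP => a b; rewrite !mxE.
Qed.

Lemma mx_funD (x y : G -> 'M[A]_r) :
  mx_fun (gadd QA_G x y) = gadd AG_Q (mx_fun x) (mx_fun y).
Proof. by apply/matrixP => i j; rewrite !mxE; apply/funext => g; rewrite !mxE. Qed.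

Lemma mx_funZ (c : k) (x : G -> 'M[A]_r) :
  mx_fun (gscale QA_G c x) = gscale AG_Q c (mx_fun x).
Proof. by apply/matrixP => i j; rewrite !mxE; apply/funext => g; rewrite !mxE. Qed.

Lemma qver_mul0l (M : 'M[A]_r) : gmul QA 0 M = 0.
Proof.
apply/matrixP => a b; rewrite (qver_mulE (B := A_)) mxE big1 // => l _.
by rewrite mxE /= mul0r.
Qed.

Lemma mem_mx_fun (x : G -> 'M[A]_r) : gmem QA_G x <-> gmem AG_Q (mx_fun x).
Proof.
rewrite [gmem _ _]/= /skew_mem qver_zeroE finite_support_mx.
split=> [[xij finx] i j | xij].
  by apply/in_qver_entry_skew; rewrite mx_funE; split=> [|g]; [apply: finx | apply: xij].
split=> [g i j | i j]; have /in_qver_entry_skew := xij i j; rewrite mx_funE.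
  by case=> _; apply.
by case.
Qed.

Lemma mx_funM (x y : G -> 'M[A]_r) : gmem QA_G x ->
  mx_fun (gmul QA_G x y) = gmul AG_Q (mx_fun x) (mx_fun y).
Proof.
rewrite [gmem _ _]/= /skew_mem qver_zeroE => -[_ /finite_seqP[S suppx]].
have x0 g : g \notin S -> x g = 0.
  move=> gS; apply: contrapT => xg0; have : [set` S] g by rewrite -suppx.
  by rewrite /= (negbTE gS).
apply/matrixP => i j; rewrite (qver_mulE (B := AG)) skew_sumE fct_sumE mx_funE.
apply/funext => h; rewrite (skew_mulE (B := QA)) qver_sumE qver_zeroE.
rewrite (fsbig_finite_support _ (s := S)); last first.
  by move=> g; apply: contraNT => /x0->; rewrite qver_mul0l.
rewrite [LHS]summxE.
under eq_bigr => t _ do rewrite (qver_mulE (B := A_)).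
rewrite exchange_big; apply: eq_bigr => l _.
rewrite (skew_mulE (B := A_)) !mx_funE (fsbig_finite_support _ (s := S)); last first.
  by move=> g; apply: contraNT => /x0->; rewrite /= mxE mul0r.
by apply: eq_bigr => g _; rewrite /= mxE.
Qed.

Lemma mx_fun1 : mx_fun (gone QA_G) = gone AG_Q.
Proof.
apply/matrixP => i j; rewrite mx_funE mxE; apply/funext => g /=.
by case: ifP => ij; case: ifP => g1; rewrite mxE ?ij ?g1.
Qed.

Lemma qver_entry_deg_skew n (i j : 'I_r) (y : G -> A) : skew_mem (B := A_) y ->
  qver_entry_deg (B := AG) n i j y <-> forall g, qver_entry_deg (B := A_) n i j (y g).
Proof.
rewrite /qver_entry_deg; case: ifP => _ memy /=; first by split=> [[]|].
by split=> [-> | y0] //; apply/funext.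
Qed.

Lemma gdeg_mx_fun n (x : G -> 'M[A]_r) : gmem QA_G x ->
  gdeg QA_G n x <-> gdeg AG_Q n (mx_fun x).
Proof.
move=> memx; have memxij i j : skew_mem (B := A_) (mx_fun x i j).
  move: memx; rewrite [gmem _ _]/= /skew_mem qver_zeroE finite_support_mx mx_funE.
  by case=> _ finx; split=> //; apply: finx.
split=> [[_ degx] i j | degx].
  by apply/qver_entry_deg_skew => // g; rewrite mx_funE; apply: degx.
split=> // g i j; have /qver_entry_deg_skew := degx i j; rewrite mx_funE.
by apply; rewrite -mx_funE.
Qed.
End SkewQuasiVeronese.

Theorem lemma2p29 (k : closedFieldType) (A : algType k) (Ad : nat -> A -> Prop)
    (gradedA : is_grading Ad)
    (G : groupType) (act : G -> A -> A) (HG : is_GrAut_subgroup Ad act)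
    (r : nat) (hr : (1 <= r)%N) :
  exists f, galg_iso (skew_group_alg (qver (alg_of Ad) r) (qver_act (alg_of Ad) r act))
                     (qver (skew_group_alg (alg_of Ad) act) r) f.
Proof.
have Ad0 : forall d, Ad d 0 by case: gradedA.
exists (@mx_fun G A r r).
split; [|split; [|split; [|split; [|split; [|split; [|split]]]]]].
- by move=> x /(mem_mx_fun act Ad0).
- by move=> x y _ _ /(can_inj (@mx_funK _ _ _ _)).
- move=> M memM; exists (fun_mx M); last exact: fun_mxK.
  by apply/(mem_mx_fun act Ad0); rewrite fun_mxK.
- by move=> x y _ _; apply: mx_funD.
- by move=> c x _; apply: mx_funZ.
- by move=> x y memx _; apply: mx_funM.
- exact: mx_fun1.
- by move=> n x memx; apply: gdeg_mx_fun.
Qed.
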